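(* Let $p>0$, let $n$ be a positive integer and let $0<a_n\leq\dots\leq a_1$ be reals with $\sum_{i=1}^n a_i^p=1$. Then for all $0\leq m\leq n$ and $q\geq p$, $$\left(\sum_{i=m+1}^n a_i^q\right)^{1/q}\leq\frac{(p/q)^{1/q}(1-p/q)^{1/p-1/q}}{m^{1/p-1/q}}.$$ In particular, for every $\varepsilon>0$ there exists $C=C(\varepsilon)$ such that for all $q\geq p+\varepsilon$, $$\left(\sum_{i=m+1}^n a_i^q\right)^{1/q}\leq\frac{C}{m^{1/p-1/q}}.$$ *)

From HB Require Import structures.
From mathcomp Require Import all_boot all_order all_algebra.
From mathcomp Require Import all_classical all_reals all_analysis.
Set Implicit Arguments. Unset Strict Implicit. Unset Printing Implicit Defensive.
Import Order.TTheory GRing.Theory Num.Theory.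
Local Open Scope ring_scope.

Definition admissible {R : realType} (p : R) (n : nat) (a : nat -> R) : Prop :=
  (0 < n)%N /\
  (forall i, (1 <= i <= n)%N -> 0 < a i) /\
  (forall i j, (1 <= i)%N -> (i <= j)%N -> (j <= n)%N -> a j <= a i) /\
  \sum_(1 <= i < n.+1) (a i) `^ p = 1.

Definition tail_norm {R : realType} (q : R) (n m : nat) (a : nat -> R) : R :=
  (\sum_(m.+1 <= i < n.+1) (a i) `^ q) `^ q^-1.

From HB Require Import structures.
From mathcomp Require Import all_boot all_order all_algebra.
From mathcomp Require Import all_classical all_reals all_analysis.
From mathcomp Require Import ring lra zify.
Import Order.TTheory GRing.Theory Num.Theory.
Local Open Scope ring_scope.

(* With T the tail mass sum_{i>m} a_i^p, monotonicity gives m a_m^p <= 1 - T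
   and sum_{i>m} a_i^q <= T a_m^(q-p), hence
   sum_{i>m} a_i^q <= T (1 - T)^r / m^r  with  r = q/p - 1.
   The function T |-> T (1 - T)^r on [0, 1] is maximal at T = 1/(1+r) = p/q,
   and taking q-th roots gives the bound; its constant is at most 1, which
   yields the uniform version. *)

Lemma ln_le_subr1 {R : realType} (x : R) : 0 < x -> ln x <= x - 1.
Proof.
by move=> x0; have := @le_ln1Dx R (x - 1); rewrite addrCA subrr addr0; apply; lra.
Qed.

Lemma mul_powR_1B_le_max {R : realType} (t al r : R) :
  0 <= t <= 1 -> 0 < r -> al * (1 + r) = 1 ->
  t * (1 - t) `^ r <= al * (1 - al) `^ r.
Proof.
move=> /andP[t0 t1] r0 hal.
have al0 : 0 < al by nra.
have al1 : 0 < 1 - al by nra.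
have max_ge0 : 0 <= al * (1 - al) `^ r by rewrite mulr_ge0 ?powR_ge0 ?ltW.
have [->|tn0] := eqVneq t 0; first by rewrite mul0r.
have [->|tn1] := eqVneq t 1; first by rewrite subrr powR0 ?mulr0 // gt_eqF.
have tp : 0 < t by rewrite lt_neqAle eq_sym tn0.
have t1p : 0 < 1 - t by rewrite subr_gt0 lt_neqAle tn1.
rewrite -ler_ln ?posrE ?mulr_gt0 ?powR_gt0 // !lnM ?posrE ?powR_gt0 // !ln_powR.
(* The tangent bounds ln y <= y - 1 at y = t/al and y = (1-t)/(1-al),
   the second weighted by r, add up to 0 because al (1 + r) = 1. *)
have := ln_le_subr1 _ (divr_gt0 tp al0); rewrite ln_div ?posrE //.
have := ln_le_subr1 _ (divr_gt0 t1p al1); rewrite ln_div ?posrE //.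
have ial : al^-1 = 1 + r by apply: (@mulfI _ al); rewrite ?mulfV ?gt_eqF ?hal.
have -> : t / al = t * (1 + r) by rewrite ial.
have -> : (1 - t) / (1 - al) = (1 - t) * (1 + r) / r.
  by rewrite [1 - al](_ : _ = al * r) ?invfM ?ial ?mulrA //; nra.
move=> /(ler_wpM2l (ltW r0)); rewrite mulrBr mulrBr mulrCA divff ?mulr1 ?gt_eqF //.
lra.
Qed.

Lemma powR_div {R : realType} (x y s : R) : 0 <= x -> 0 <= y ->
  (x / y) `^ s = x `^ s / y `^ s.
Proof.
move=> x0 y0; rewrite powRM ?invr_ge0 //.
by rewrite -powR_inv1 // -powRrM mulN1r powRN.
Qed.

Lemma powR_le1 {R : realType} (x s : R) : 0 <= x <= 1 -> 0 <= s -> x `^ s <= 1.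
Proof.
move=> /andP[x0 x1] s0.
by apply: le_trans (ge0_ler_powR s0 _ _ x1) _; rewrite ?nnegrE ?powR1.
Qed.

Section NonincreasingSequence.
Context {R : realType} {n : nat} {a : nat -> R}.
Hypothesis a_gt0 : forall i, (1 <= i <= n)%N -> 0 < a i.
Hypothesis a_nonincr : forall i j, (1 <= i)%N -> (i <= j)%N -> (j <= n)%N -> a j <= a i.

Lemma le_powR_nonincr (s : R) i j : 0 <= s -> (1 <= i)%N -> (i <= j <= n)%N ->
  a j `^ s <= a i `^ s.
Proof.
move=> s0 i1 /andP[ij jn].
have ai0 : 0 < a i by apply: a_gt0; lia.
have aj0 : 0 < a j by apply: a_gt0; lia.
by apply: ge0_ler_powR; rewrite ?nnegrE ?a_nonincr // ltW.
Qed.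

Lemma head_sum_powR_ge (p : R) m : 0 <= p -> (1 <= m <= n)%N ->
  m%:R * a m `^ p <= \sum_(1 <= i < m.+1) a i `^ p.
Proof.
move=> p0 /andP[m1 mn].
have -> : m%:R * a m `^ p = \sum_(1 <= i < m.+1) a m `^ p.
  by rewrite sumr_const_nat subn1 mulr_natl.
by apply: ler_sum_nat => i /andP[i1 im]; apply: le_powR_nonincr => //; lia.
Qed.

Lemma tail_sum_powR_le (p q : R) m : 0 <= p <= q -> (1 <= m <= n)%N ->
  \sum_(m.+1 <= i < n.+1) a i `^ q <= a m `^ (q - p) * \sum_(m.+1 <= i < n.+1) a i `^ p.
Proof.
move=> /andP[p0 pq] /andP[m1 mn]; rewrite mulr_sumr.
apply: ler_sum_nat => i /andP[mi i_n].
have ai0 : 0 < a i by apply: a_gt0; lia.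
have -> : a i `^ q = a i `^ (q - p) * a i `^ p.
  by rewrite -powRD ?(gt_eqF ai0) ?implybT // subrK.
apply: ler_wpM2r; first exact: powR_ge0.
by apply: le_powR_nonincr; rewrite ?subr_ge0 //; lia.
Qed.

End NonincreasingSequence.

Definition tail_const {R : realType} (p q : R) : R :=
  (p / q) `^ q^-1 * (1 - p / q) `^ (p^-1 - q^-1).

Lemma tail_sum_powR_bound {R : realType} (p q : R) {n : nat} {a : nat -> R} {m : nat} :
  0 < p < q -> admissible p n a -> (1 <= m <= n)%N ->
  \sum_(m.+1 <= i < n.+1) a i `^ q <=
    p / q * (1 - p / q) `^ (q / p - 1) / m%:R `^ (q / p - 1).
Proof.
move=> /andP[p0 pq] [_ [a_gt0 [a_nonincr sum1]]] /[dup] m_range /andP[m1 mn].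
have q0 : 0 < q := lt_trans p0 pq.
set r := q / p - 1; set T := \sum_(m.+1 <= i < n.+1) a i `^ p.
have r0 : 0 < r by rewrite subr_gt0 ltr_pdivlMr // mul1r.
have T0 : 0 <= T by apply: sumr_ge0 => i _; apply: powR_ge0.
have m0 : 0 < m%:R :> R by rewrite ltr0n.
have head_le : m%:R * a m `^ p <= 1 - T.
  have -> : 1 - T = \sum_(1 <= i < m.+1) a i `^ p.
    by rewrite -sum1 (big_cat_nat (leqW m1) (mn : m < n.+1)%N) /= addrK.
  exact: head_sum_powR_ge (ltW p0) m_range.
have T_le1 : 0 <= 1 - T by apply: (le_trans _ head_le); rewrite mulr_ge0 ?ler0n ?powR_ge0.
have am_le : a m `^ (q - p) <= (1 - T) `^ r / m%:R `^ r.
  rewrite -powR_div ?ler0n // (_ : q - p = p * r) ?powRrM; last first.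
    by rewrite /r; field; rewrite gt_eqF.
  apply: (ge0_ler_powR (ltW r0)); rewrite ?nnegrE ?powR_ge0 ?divr_ge0 ?ler0n //.
  by rewrite ler_pdivlMr // mulrC.
have pq_le : 0 <= p <= q by rewrite (ltW p0) (ltW pq).
apply: (le_trans (tail_sum_powR_le a_gt0 a_nonincr _ _ _ pq_le m_range)).
rewrite -/T mulrC; apply: le_trans (ler_wpM2l T0 am_le) _.
rewrite mulrA ler_wpM2r ?invr_ge0 ?powR_ge0 //.
apply: mul_powR_1B_le_max => //.
- by rewrite T0 -subr_ge0.
- by rewrite /r addrC subrK mulrA divfK ?divff ?gt_eqF.
Qed.

Lemma tail_norm_le_const {R : realType} (p q : R) {n : nat} {a : nat -> R} {m : nat} :
  0 < p < q -> admissible p n a -> (1 <= m <= n)%N ->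
  tail_norm q n m a <= tail_const p q / m%:R `^ (p^-1 - q^-1).
Proof.
move=> /[dup] pq_range /andP[p0 pq] adm m_range.
have q0 : 0 < q := lt_trans p0 pq.
have al0 : 0 <= p / q by rewrite divr_ge0 ?ltW.
have al1 : 0 <= 1 - p / q by rewrite subr_ge0 ler_pdivrMr // mul1r ltW.
have sum_le := tail_sum_powR_bound p q pq_range adm m_range.
rewrite /tail_norm; apply: (le_trans (ge0_ler_powR _ _ _ sum_le)).
- by rewrite invr_ge0 ltW.
- by rewrite nnegrE sumr_ge0 // => i _; rewrite powR_ge0.
- by rewrite nnegrE divr_ge0 ?powR_ge0 // mulr_ge0 ?powR_ge0.
rewrite /tail_const.
have -> : p^-1 - q^-1 = (q / p - 1) * q^-1 by field; rewrite ?gt_eqF.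
by rewrite powR_div ?ler0n ?(mulr_ge0 al0) ?powR_ge0 // powRM ?powR_ge0 // -!powRrM.
Qed.

Lemma tail_norm_le1 {R : realType} (p : R) {n : nat} {a : nat -> R} {m : nat} :
  0 < p -> admissible p n a -> (m <= n)%N -> tail_norm p n m a <= 1.
Proof.
move=> p0 [_ [_ [_ sum1]]] mn.
have tail_ge0 : 0 <= \sum_(m.+1 <= i < n.+1) a i `^ p.
  by rewrite sumr_ge0 // => i _; rewrite powR_ge0.
rewrite /tail_norm powR_le1 ?tail_ge0 ?invr_ge0 ?(ltW p0) //=.
by rewrite -sum1 (big_cat_nat (ltn0Sn m) (mn : m < n.+1)%N) /= lerDr sumr_ge0 // => *;
  rewrite powR_ge0.
Qed.

Lemma tail_const_le1 {R : realType} (p q : R) : 0 < p <= q -> tail_const p q <= 1.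
Proof.
move=> /andP[p0 pq]; have q0 : 0 < q := lt_le_trans p0 pq.
have al0 : 0 <= p / q by rewrite divr_ge0 ?ltW.
have al1 : p / q <= 1 by rewrite ler_pdivrMr // mul1r.
rewrite mulr_ile1 ?powR_ge0 ?powR_le1 ?al0 ?al1 ?invr_ge0 ?(ltW q0) //.
- by rewrite subr_ge0 al1 lerBlDr lerDl al0.
- by rewrite subr_ge0 lef_pV2 ?posrE.
Qed.

Theorem lemma7p4 (R : realType) (p : R) (hp : 0 < p) :
  (forall (n : nat) (a : nat -> R) (m : nat) (q : R),
      admissible p n a -> (m <= n)%N -> p <= q ->
      ((0 < m)%N \/ q = p) ->
      tail_norm q n m a <=
        (p / q) `^ q^-1 * (1 - p / q) `^ (p^-1 - q^-1)
          / (m%:R `^ (p^-1 - q^-1)))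
  /\
  (forall eps : R, 0 < eps ->
     exists C : R, forall (n : nat) (a : nat -> R) (m : nat) (q : R),
       admissible p n a -> (1 <= m <= n)%N -> p + eps <= q ->
       tail_norm q n m a <= C / (m%:R `^ (p^-1 - q^-1))).
Proof.
split=> [n a m q adm mn|eps eps0].
  rewrite le_eqVlt => /predU1P[<- _|pq [m_gt0|qp]]; last by move: pq; rewrite qp ltxx.
    rewrite divff ?gt_eqF // !subrr !powRr0 powR1 mulr1 divr1.
    exact: tail_norm_le1.
  by apply: tail_norm_le_const; rewrite ?hp ?pq ?m_gt0 ?mn.
exists 1 => n a m q adm m_range peps_le_q.
have pq : p < q by apply: lt_le_trans peps_le_q; rewrite ltrDl.
apply: le_trans (tail_norm_le_const p q _ adm m_range) _; first by rewrite hp.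
by rewrite ler_wpM2r ?invr_ge0 ?powR_ge0 // tail_const_le1 // hp ltW.
Qed.
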